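(* Let $\mathbb{F}\in\{\mathbb{R},\mathbb{C}\}$, $N\ge 2$, and let $\mathcal{E}(M,N)=\{\{\varphi_i\}_{i=1}^M\subseteq\mathbb{F}^N:\|\varphi_i\|=\sqrt{N/M}\text{ for all }i\}$. Suppose an equiangular Parseval frame for $\mathbb{F}^N$ with $M$ vectors exists. Then $\Phi\in\mathcal{E}(M,N)$ maximizes $NE_2$ over $\mathcal{E}(M,N)$ if and only if $\Phi$ is an equiangular Parseval frame.
   Context: $\Phi$ also denotes the $N\times M$ matrix with columns $\varphi_i$. A Parseval frame satisfies $\Phi\Phi^*=I$; it is equiangular if all $\|\varphi_i\|$ are equal and all $|\langle\varphi_i,\varphi_j\rangle|$, $i\ne j$, are equal. For $K\subseteq[M]$, $\Phi_K$ is the submatrix of columns indexed by $K$. The nuclear norm $\|F\|_*$ is the sum of the singular values of $F$, and $NE_k(\Phi)=\sum_{|K|=k}\|\Phi_K\|_*$. *)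

From HB Require Import structures.
From mathcomp Require Import all_boot all_order all_algebra.
From mathcomp Require Import complex.
From mathcomp Require Import reals.
Set Implicit Arguments. Unset Strict Implicit. Unset Printing Implicit Defensive.
Import Order.TTheory GRing.Theory Num.Theory.
Local Open Scope ring_scope.

Section Defs.
Variable C : numClosedFieldType.

Definition adjmx m n (A : 'M[C]_(m, n)) : 'M[C]_(n, m) := (map_mx Num.conj A)^T.

Definition eigenvalues k (A : 'M[C]_k) : seq C :=
  sval (closed_field_poly_normal (char_poly A)).

Definition singular_values n k (F : 'M[C]_(n, k)) : seq C :=
  [seq sqrtC x | x <- eigenvalues (adjmx F *m F)].

Definition nuclear_norm n k (F : 'M[C]_(n, k)) : C :=
  \sum_(s <- singular_values F) s.

Definition colsubset n M (Phi : 'M[C]_(n, M)) (K : {set 'I_M}) : 'M[C]_(n, #|K|) :=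
  colsub (fun j : 'I_#|K| => enum_val j) Phi.

Definition NE n M (k : nat) (Phi : 'M[C]_(n, M)) : C :=
  \sum_(K : {set 'I_M} | #|K| == k) nuclear_norm (colsubset Phi K).

Definition inner_col n M (Phi : 'M[C]_(n, M)) (i j : 'I_M) : C :=
  \sum_k Phi k i * Num.conj (Phi k j).

Definition norm_col n M (Phi : 'M[C]_(n, M)) (i : 'I_M) : C :=
  sqrtC (\sum_k `|Phi k i| ^+ 2).

Definition parseval n M (Phi : 'M[C]_(n, M)) : Prop := Phi *m adjmx Phi = 1%:M.

Definition equiangular n M (Phi : 'M[C]_(n, M)) : Prop :=
  (forall i j, norm_col Phi i = norm_col Phi j) /\
  (forall i j i' j', i != j -> i' != j' ->
     `|inner_col Phi i j| = `|inner_col Phi i' j'|).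

(* the scalar field F: F = R (realF = true, entries real) or F = C *)
Definition in_field (realF : bool) (x : C) : bool :=
  if realF then x \is Num.real else true.

Definition over_field (realF : bool) n M (Phi : 'M[C]_(n, M)) : Prop :=
  forall k i, in_field realF (Phi k i).

Definition calE (realF : bool) n M (Phi : 'M[C]_(n, M)) : Prop :=
  over_field realF Phi /\ forall i, norm_col Phi i = sqrtC (n%:R / M%:R).

End Defs.

(* Every column of a frame in E(M,N) has squared norm a = N/M, and the nuclear norm
   of a pair of columns with |<phi_i, phi_j>| = t is sqrt(a + t) + sqrt(a - t), a concave
   function of t^2.  Comparing it with its tangent at the squared Welch bound s gives
   2 NE_2(Phi) <= M (M - 1) (sqrt(a + sqrt s) + sqrt(a - sqrt s)) - lambda D with
   lambda > 0 and D = sum_{i <> j} t_ij^2 - M (M - 1) s, with equality iff every t_ij is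
   sqrt s.  Now D is the squared Frobenius distance from Phi Phi^* to the identity, so
   D >= 0 with equality iff Phi is Parseval.  Hence the bound holds on E(M,N) and is
   attained exactly by the Parseval frames whose off-diagonal moduli are all sqrt s,
   i.e. by the equiangular Parseval frames; since one exists, these are the maximisers. *)

From HB Require Import structures.
From mathcomp Require Import all_boot all_order all_algebra.
From mathcomp Require Import complex.
From mathcomp Require Import reals.
From mathcomp Require Import ring lra.
Set Implicit Arguments. Unset Strict Implicit. Unset Printing Implicit Defensive.
Import Order.TTheory GRing.Theory Num.Theory.
Local Open Scope ring_scope.

Section Adjoint.
Variable C : numClosedFieldType.

Lemma adjmxE m n (A : 'M[C]_(m, n)) i j : adjmx A i j = (A j i)^*.
Proof. by rewrite !mxE. Qed.

Lemma adjmxM m n p (A : 'M[C]_(m, n)) (B : 'M[C]_(n, p)) :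
  adjmx (A *m B) = adjmx B *m adjmx A.
Proof. by rewrite /adjmx map_mxM trmx_mul. Qed.

Lemma adjmxK m n (A : 'M[C]_(m, n)) : adjmx (adjmx A) = A.
Proof. by apply/matrixP => i j; rewrite !mxE conjCK. Qed.

Lemma adjmxB m n (A B : 'M[C]_(m, n)) : adjmx (A - B) = adjmx A - adjmx B.
Proof. by apply/matrixP => i j; rewrite !mxE rmorphB. Qed.

Lemma adjmx1 n : adjmx (1%:M : 'M[C]_n) = 1%:M.
Proof. by apply/matrixP => i j; rewrite !mxE eq_sym conjC_nat. Qed.

Lemma mxtrace_mul_adjmx m n (A : 'M[C]_(m, n)) :
  \tr (A *m adjmx A) = \sum_i \sum_j `|A i j| ^+ 2.
Proof.
by apply: eq_bigr => i _; rewrite mxE; apply: eq_bigr => j _; rewrite adjmxE normCK.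
Qed.

Lemma mxtrace_mul_adjmx_leif m n (A : 'M[C]_(m, n)) :
  0 <= \tr (A *m adjmx A) ?= iff (A == 0).
Proof.
rewrite mxtrace_mul_adjmx.
have leA i j : 0 <= `|A i j| ^+ 2 ?= iff (A i j == 0).
  by rewrite -normr_eq0 -sqrf_eq0 eq_sym; apply: leif_eq; rewrite exprn_ge0.
suff -> : (A == 0) = [forall (i | true), [forall (j | true), A i j == 0]].
  by apply: leif_0_sum => i _; apply: leif_0_sum.
apply/eqP/forall_inP => [-> i _|A0]; first by apply/forall_inP => j _; rewrite mxE.
by apply/matrixP => i j; rewrite mxE; exact/eqP/(forall_inP (A0 i isT)).
Qed.

End Adjoint.

Section Pairs.
Variable T : finType.

Lemma sum_diag_offdiag (V : nmodType) (F : T -> T -> V) :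
  \sum_i \sum_j F i j = \sum_i F i i + \sum_(p : T * T | p.1 != p.2) F p.1 p.2.
Proof.
rewrite -(pair_big_dep xpredT (fun i j => i != j)) -big_split /=.
apply: eq_bigr => i _; rewrite (bigD1 i) //=; congr (_ + _).
by apply: eq_bigl => j; rewrite eq_sym.
Qed.

Lemma card_offdiag : #|[pred p : T * T | p.1 != p.2]| = (#|T| * #|T|.-1)%N.
Proof.
have := @sum_diag_offdiag nat (fun _ _ => 1%N).
rewrite sum1_card !sum_nat_const muln1 /=.
rewrite (eq_card (B := T)) // (eq_card (B := [pred p : T * T | p.1 != p.2])) //.
by case: #|T| => // k; rewrite mulSn => /addnI <-; rewrite mulnC.
Qed.

Lemma set2_eq (x y i j : T) :
  ([set i; j] == [set x; y]) = ((i, j) == (x, y)) || ((i, j) == (y, x)).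
Proof.
rewrite !xpair_eqE; apply/eqP/idP => [ij_xy|]; last first.
  by case/orP=> /andP[/eqP-> /eqP->] //; apply: setUC.
have : i \in [set x; y] by rewrite -ij_xy set21.
have : j \in [set x; y] by rewrite -ij_xy set22.
have : x \in [set i; j] by rewrite ij_xy set21.
have : y \in [set i; j] by rewrite ij_xy set22.
rewrite !in_set2; do 4!case/orP=> /eqP ?; subst.
all: by rewrite !eqxx ?orbT.
Qed.

Lemma sum_offdiag_set2 (V : nmodType) (W : {set T} -> V) :
  \sum_(p : T * T | p.1 != p.2) W [set p.1; p.2] =
  (\sum_(K : {set T} | #|K| == 2) W K) *+ 2.
Proof.
rewrite (partition_big (fun p => [set p.1; p.2]) (fun K : {set T} => #|K| == 2)) /=;
  last by move=> p p_off; rewrite cards2 p_off.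
rewrite -sumrMnl; apply: eq_bigr => K /cards2P [x [y [xy ->]]].
rewrite (eq_bigr (fun=> W [set x; y])); last by move=> p /andP [_ /eqP ->].
rewrite sumr_const (eq_card (B := pred2 (x, y) (y, x))) ?card2 ?xpair_eqE ?(negbTE xy) //.
case=> i j; rewrite unfold_in /= set2_eq andb_idl //.
by case/orP=> /eqP [-> ->]; rewrite // eq_sym.
Qed.

End Pairs.

Section Frames.
Variables (C : numClosedFieldType) (n M : nat).
Implicit Type Phi : 'M[C]_(n, M).

Lemma inner_colC Phi i j : inner_col Phi j i = (inner_col Phi i j)^*.
Proof.
by rewrite rmorph_sum; apply: eq_bigr => k _; rewrite rmorphM /= conjCK mulrC.
Qed.

Lemma gram_mxE Phi i j : (adjmx Phi *m Phi) i j = inner_col Phi j i.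
Proof. by rewrite mxE; apply: eq_bigr => k _; rewrite adjmxE mulrC. Qed.

Lemma norm_colE Phi i : norm_col Phi i = sqrtC (inner_col Phi i i).
Proof. by congr sqrtC; apply: eq_bigr => k _; rewrite normCK. Qed.

Lemma inner_col_diag Phi i : inner_col Phi i i = norm_col Phi i ^+ 2.
Proof. by rewrite norm_colE sqrtCK. Qed.

Lemma mxtrace_frame_op Phi : \tr (Phi *m adjmx Phi) = \sum_i inner_col Phi i i.
Proof. by rewrite mxtrace_mulC; apply: eq_bigr => i _; rewrite gram_mxE. Qed.

Lemma frame_potentialE Phi :
  \sum_i \sum_j `|inner_col Phi i j| ^+ 2 =
  \tr ((Phi *m adjmx Phi) *m (Phi *m adjmx Phi)).
Proof.
have gram_adj : adjmx (adjmx Phi *m Phi) = adjmx Phi *m Phi.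
  by rewrite adjmxM adjmxK.
transitivity (\tr ((adjmx Phi *m Phi) *m adjmx (adjmx Phi *m Phi))).
  rewrite exchange_big mxtrace_mul_adjmx; apply: eq_bigr => i _.
  by apply: eq_bigr => j _; rewrite gram_mxE.
by rewrite gram_adj -!mulmxA mxtrace_mulC !mulmxA.
Qed.

Lemma parseval_defectE Phi (S := Phi *m adjmx Phi) :
  \tr ((S - 1%:M) *m adjmx (S - 1%:M)) = \tr (S *m S) - \tr S *+ 2 + n%:R.
Proof.
have S_adj : adjmx S = S by rewrite adjmxM adjmxK.
rewrite adjmxB S_adj adjmx1 mulmxBl !mulmxBr mul1mx mulmx1 !raddfB /=.
by rewrite mulmx1 mxtrace1 mulr2n; ring.
Qed.

Lemma norm_inner_col_le Phi i j (a : C) :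
  0 < a -> inner_col Phi i i = a -> inner_col Phi j j = a ->
  `|inner_col Phi i j| <= a.
Proof.
move=> a_gt0 Phi_i Phi_j; set c := inner_col Phi i j.
have aJ : a^* = a by rewrite geC0_conj // ltW.
have sum_sqr : \sum_k `|a * Phi k i - c * Phi k j| ^+ 2 = a * (a ^+ 2 - `|c| ^+ 2).
  under eq_bigr do rewrite normCK rmorphB !rmorphM /= aJ.
  rewrite (eq_bigr (fun k => a * a * (Phi k i * (Phi k i)^*)
      - a * c^* * (Phi k i * (Phi k j)^*) - a * c * (Phi k j * (Phi k i)^*)
      + c * c^* * (Phi k j * (Phi k j)^*))); last by move=> k _; ring.
  rewrite !big_split /= !sumrN -!mulr_sumr.
  rewrite -[\sum_k Phi k i * (Phi k i)^*]/(inner_col Phi i i) Phi_i.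
  rewrite -[\sum_k Phi k j * (Phi k j)^*]/(inner_col Phi j j) Phi_j.
  rewrite -[\sum_k Phi k i * (Phi k j)^*]/c -[\sum_k Phi k j * _]/(inner_col Phi j i).
  by rewrite inner_colC normCK; ring.
have : 0 <= a * (a ^+ 2 - `|c| ^+ 2).
  by rewrite -sum_sqr; apply: sumr_ge0 => k _; apply: exprn_ge0.
rewrite pmulr_rge0 // subr_ge0 => c_le_a.
by rewrite -(ler_pXn2r (isT : (0 < 2)%N)) ?nnegrE ?normr_ge0 ?(ltW a_gt0).
Qed.

Lemma parseval_le Phi : parseval Phi -> (n <= M)%N.
Proof.
move=> parPhi; rewrite -[n](mxrank1 C) -parPhi.
exact: leq_trans (mxrankM_maxl _ _) (rank_leq_col _).
Qed.

Lemma parseval_inner_col_diag Phi :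
  parseval Phi -> (forall i j, norm_col Phi i = norm_col Phi j) ->
  forall i, inner_col Phi i i = n%:R / M%:R.
Proof.
move=> parPhi eq_norm i.
have M_gt0 : (0 < M)%N := leq_ltn_trans (leq0n i) (ltn_ord i).
have : \tr (Phi *m adjmx Phi) = inner_col Phi i i *+ M.
  rewrite mxtrace_frame_op (eq_bigr (fun=> inner_col Phi i i)) ?sumr_const ?card_ord //.
  by move=> j _; rewrite !inner_col_diag (eq_norm j i).
rewrite parPhi mxtrace1 => ->.
by rewrite -[_ *+ M]mulr_natr mulfK // pnatr_eq0 -lt0n.
Qed.

Lemma calE_inner_col realF Phi :
  calE realF Phi -> forall i, inner_col Phi i i = n%:R / M%:R.
Proof. by move=> [_ Phi_norm] i; rewrite inner_col_diag Phi_norm sqrtCK. Qed.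

Lemma offdiag_potential_leif Phi (a : C) :
  (forall i, inner_col Phi i i = a) -> a *+ M = n%:R ->
  n%:R - `|a| ^+ 2 *+ M
    <= \sum_(p : 'I_M * 'I_M | p.1 != p.2) `|inner_col Phi p.1 p.2| ^+ 2
  ?= iff (Phi *m adjmx Phi == 1%:M).
Proof.
move=> Phi_diag aM; set S := Phi *m adjmx Phi.
have diag_sum : \sum_i `|inner_col Phi i i| ^+ 2 = `|a| ^+ 2 *+ M.
  rewrite (eq_bigr (fun=> `|a| ^+ 2)) ?sumr_const ?card_ord // => i _.
  by rewrite Phi_diag.
have trS : \tr S = n%:R.
  by rewrite mxtrace_frame_op (eq_bigr (fun=> a)) ?sumr_const ?card_ord.
have -> : \sum_(p : 'I_M * 'I_M | p.1 != p.2) `|inner_col Phi p.1 p.2| ^+ 2 =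
          \tr ((S - 1%:M) *m adjmx (S - 1%:M)) + (n%:R - `|a| ^+ 2 *+ M).
  apply: (addrI (`|a| ^+ 2 *+ M)).
  rewrite -[in LHS]diag_sum.
  rewrite -(@sum_diag_offdiag _ _ (fun i j => `|inner_col Phi i j| ^+ 2)) /=.
  by rewrite frame_potentialE parseval_defectE trS mulr2n; ring.
rewrite -leifBLR subrr -subr_eq0.
exact: mxtrace_mul_adjmx_leif.
Qed.

End Frames.

Lemma det_mx2 (R : comPzRingType) (B : 'M[R]_2) :
  \det B = B 0 0 * B 1 1 - B 0 1 * B 1 0.
Proof.
rewrite (expand_det_row _ 0) !big_ord_recl big_ord0 /cofactor !det_mx11 !mxE /=.
have -> : lift (0 : 'I_2) (0 : 'I_1) = 1 by apply: val_inj.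
have -> : lift (1 : 'I_2) (0 : 'I_1) = 0 by apply: val_inj.
have -> : (ord0 : 'I_2) = 0 by apply: val_inj.
by rewrite /bump /= expr0 expr1; ring.
Qed.

Lemma eq_sum_prod2 (R : idomainType) (r1 r2 x y : R) :
  r1 + r2 = x + y -> r1 * r2 = x * y -> (r1 = x /\ r2 = y) \/ (r1 = y /\ r2 = x).
Proof.
move=> sum_r prod_r.
have : (r1 - x) * (r1 - y) = 0.
  have -> : (r1 - x) * (r1 - y) = r1 * (r1 + r2) - r1 * r2 - r1 * (x + y) + x * y by ring.
  by rewrite sum_r prod_r; ring.
move/eqP; rewrite mulf_eq0 !subr_eq0 => /orP [] /eqP r1E; [left | right];
  by split=> //; apply: (addrI r1); rewrite sum_r r1E addrC.
Qed.

Section NuclearNorm.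
Variable C : numClosedFieldType.

Lemma eigenvalues_mx2 (B : 'M[C]_2) :
  exists r1 r2, [/\ eigenvalues B = [:: r1; r2], r1 + r2 = \tr B & r1 * r2 = \det B].
Proof.
rewrite /eigenvalues; case: closed_field_poly_normal => rs /=.
rewrite (monicP (char_poly_monic B)) scale1r => charB.
have := size_char_poly B; rewrite charB size_prod_XsubC.
case: rs charB => [|r1 [|r2 []]] //=; rewrite !big_cons big_nil mulr1 => charB _.
exists r1, r2; split=> //.
  apply: oppr_inj; rewrite -char_poly_trace // charB.
  by rewrite !mulrBl !mulrBr !coefE /=; ring.
have := char_poly_det B; rewrite charB sqrrN expr1n mul1r => <-.
by rewrite !mulrBl !mulrBr !coefE /=; ring.
Qed.

Lemma nuclear_norm_two_columns n k (F : 'M[C]_(n, k)) (A T : C) :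
  k = 2%N -> (forall p, inner_col F p p = A) ->
  (forall p q, p != q -> `|inner_col F p q| = T) ->
  nuclear_norm F = sqrtC (A + T) + sqrtC (A - T).
Proof.
move=> k2; subst k => F_diag F_off; set G := adjmx F *m F.
have [r1 [r2 [eigG trG detG]]] := eigenvalues_mx2 G.
have sum_r : r1 + r2 = (A + T) + (A - T).
  rewrite trG /mxtrace !big_ord_recl big_ord0 !gram_mxE !F_diag; ring.
have prod_r : r1 * r2 = (A + T) * (A - T).
  rewrite detG det_mx2 !gram_mxE !F_diag [inner_col F 1 0]inner_colC -normCKC.
  by rewrite (F_off 0 1) //; ring.
rewrite /nuclear_norm /singular_values eigG !big_cons big_nil addr0.
by case: (eq_sum_prod2 sum_r prod_r) => -[-> ->] //; rewrite addrC.
Qed.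

Lemma inner_colsubset n M (Phi : 'M[C]_(n, M)) K p q :
  inner_col (colsubset Phi K) p q = inner_col Phi (enum_val p) (enum_val q).
Proof. by apply: eq_bigr => k _; rewrite !mxE. Qed.

Lemma nuclear_norm_colsubset2 n M (Phi : 'M[C]_(n, M)) (a : C) i j :
  (forall l, inner_col Phi l l = a) -> i != j ->
  nuclear_norm (colsubset Phi [set i; j]) =
  sqrtC (a + `|inner_col Phi i j|) + sqrtC (a - `|inner_col Phi i j|).
Proof.
move=> Phi_diag ij; apply: nuclear_norm_two_columns.
- by rewrite cards2 ij.
- by move=> p; rewrite inner_colsubset.
move=> p q pq; rewrite inner_colsubset.
have : enum_val p != enum_val q by apply: contra pq => /eqP /enum_val_inj ->.
have := enum_valP p; have := enum_valP q; rewrite !in_set2.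
by do 2![case/orP=> /eqP ->]; rewrite ?eqxx // => _; rewrite inner_colC norm_conjC.
Qed.

Lemma NE2_offdiag n M (Phi : 'M[C]_(n, M)) (a : C) :
  (forall l, inner_col Phi l l = a) ->
  NE 2 Phi *+ 2 = \sum_(p : 'I_M * 'I_M | p.1 != p.2)
    (sqrtC (a + `|inner_col Phi p.1 p.2|) + sqrtC (a - `|inner_col Phi p.1 p.2|)).
Proof.
move=> Phi_diag; rewrite /NE -sum_offdiag_set2.
by apply: eq_bigr => p; apply: nuclear_norm_colsubset2.
Qed.

End NuclearNorm.

Section SqrtPair.
Variable R : rcfType.

Definition sqrt_pair (a t : R) := Num.sqrt (a + t) + Num.sqrt (a - t).

Variables (a s : R).
Hypotheses (a_gt0 : 0 < a) (s_ge0 : 0 <= s) (s_lt : s < a ^+ 2).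

Let ts := Num.sqrt s.
Let y := sqrt_pair a ts.
Let Ws := Num.sqrt (a + ts) * Num.sqrt (a - ts).
(* minus the derivative of [u |-> sqrt_pair a (Num.sqrt u)] at [u = s] *)
Let slope := (2 * Ws * y)^-1.

Let ts_ge0 : 0 <= ts. Proof. exact: sqrtr_ge0. Qed.

Let ts_lt_a : ts < a.
Proof. by rewrite -(ger0_norm (ltW a_gt0)) -sqrtr_sqr ltr_sqrt ?exprn_gt0. Qed.

Let sqrt_add_gt0 : 0 < Num.sqrt (a + ts).
Proof. by rewrite sqrtr_gt0 ltr_wpDr. Qed.

Let Ws_gt0 : 0 < Ws.
Proof. by rewrite pmulr_rgt0 // sqrtr_gt0 subr_gt0. Qed.

Let y_gt0 : 0 < y.
Proof. by rewrite ltr_wpDr ?sqrtr_ge0. Qed.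

Let slope_gt0 : 0 < slope.
Proof. by rewrite invr_gt0 (mulr_gt0 (mulr_gt0 (ltr0Sn _ 1) Ws_gt0) y_gt0). Qed.

Lemma sqrt_pair_tangent t : 0 <= t <= a ->
  sqrt_pair a t <= y - slope * (t ^+ 2 - s) ?= iff (t == ts).
Proof.
case/andP=> t_ge0 t_le_a.
have ts2 : ts ^+ 2 = s by rewrite sqr_sqrtr.
set u := Num.sqrt (a + t); set v := Num.sqrt (a - t).
set us := Num.sqrt (a + ts); set vs := Num.sqrt (a - ts).
have u2 : u ^+ 2 = a + t by rewrite sqr_sqrtr // addr_ge0 // ltW.
have v2 : v ^+ 2 = a - t by rewrite sqr_sqrtr // subr_ge0.
have us2 : us ^+ 2 = a + ts by rewrite sqr_sqrtr // addr_ge0 // ltW.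
have vs2 : vs ^+ 2 = a - ts by rewrite sqr_sqrtr // subr_ge0 ltW.
have K_gt0 : 0 < 2 * Ws * y := mulr_gt0 (mulr_gt0 (ltr0Sn _ 1) Ws_gt0) y_gt0.
have slopeK : slope * (2 * Ws * y) = 1 by rewrite mulVf // gt_eqF.
set x := sqrt_pair a t; set W := u * v.
have sqr_diff : x ^+ 2 - y ^+ 2 = 2 * (W - Ws).
  have -> : x ^+ 2 - y ^+ 2 = u ^+ 2 + v ^+ 2 - us ^+ 2 - vs ^+ 2 + 2 * (W - Ws).
    by rewrite /x /y /sqrt_pair /W /Ws -/u -/v -/us -/vs; ring.
  by rewrite u2 v2 us2 vs2; ring.
have t2 : t ^+ 2 - s = Ws ^+ 2 - W ^+ 2.
  by rewrite /W /Ws !exprMn u2 v2 us2 vs2 -ts2; ring.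
(* the tangent gap, scaled by 2 Ws y, is a sum of squares *)
have gap_ge0 : 0 <= Ws * (y - x) ^+ 2 + (W - Ws) ^+ 2.
  by rewrite addr_ge0 ?sqr_ge0 // mulr_ge0 ?sqr_ge0 // ltW.
have gapE : (y - slope * (t ^+ 2 - s) - x) * (2 * Ws * y) =
            Ws * (y - x) ^+ 2 + (W - Ws) ^+ 2.
  rewrite mulrBl mulrBl [slope * _ * _]mulrAC slopeK mul1r t2.
  have -> : Ws * (y - x) ^+ 2 + (W - Ws) ^+ 2 =
    2 * Ws * y ^+ 2 - (Ws ^+ 2 - W ^+ 2) - 2 * Ws * x * y +
    Ws * (x ^+ 2 - y ^+ 2 - 2 * (W - Ws)) by ring.
  by rewrite sqr_diff subrr mulr0 addr0; ring.
split.
  by rewrite -subr_ge0 -(pmulr_lge0 _ K_gt0) gapE.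
apply/eqP/eqP => [x_eq|t_eq]; last by rewrite /x t_eq ts2 subrr mulr0 subr0.
have : Ws * (y - x) ^+ 2 + (W - Ws) ^+ 2 = 0 by rewrite -gapE x_eq subrr mul0r.
move=> /eqP; rewrite paddr_eq0 ?sqr_ge0 // ?sqrf_eq0 ?subr_eq0; last first.
  by rewrite mulr_ge0 ?sqr_ge0 // ltW.
case/andP=> _ /eqP W_eq.
have t2s : t ^+ 2 = s by apply/eqP; rewrite -subr_eq0 t2 W_eq subrr.
by rewrite /ts -t2s sqrtr_sqr ger0_norm.
Qed.


Lemma sum_sqrt_pair_leif (I : finType) (P : pred I) (tau : I -> R) :
  (forall p, P p -> 0 <= tau p <= a) -> #|P|%:R * s <= \sum_(p | P p) tau p ^+ 2 ->
  \sum_(p | P p) sqrt_pair a (tau p) <= #|P|%:R * y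
    ?= iff [forall (p | P p), tau p == ts].
Proof.
move=> tau_bounds sum_ge; set D := \sum_(p | P p) tau p ^+ 2 - #|P|%:R * s.
have D_ge0 : 0 <= D by rewrite subr_ge0.
have le_tangent := leif_sum (fun p Pp => sqrt_pair_tangent (tau_bounds p Pp)).
have tangentE : \sum_(p | P p) (y - slope * (tau p ^+ 2 - s)) = #|P|%:R * y - slope * D.
  by rewrite sumrB -mulr_sumr sumrB !sumr_const /D !mulr_natl.
have le_D : #|P|%:R * y - slope * D <= #|P|%:R * y ?= iff (D == 0).
  split; first by rewrite gerBl mulr_ge0 // ltW.
  by rewrite -subr_eq0 addrAC subrr add0r oppr_eq0 mulf_eq0 gt_eqF.
rewrite tangentE in le_tangent.
suff <- : [forall (p | P p), tau p == ts] && (D == 0) = [forall (p | P p), tau p == ts].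
  exact: leif_trans le_tangent le_D.
apply/andb_idr => /forall_inP tau_ts.
rewrite /D (eq_bigr (fun=> s)) => [|p Pp]; last by rewrite (eqP (tau_ts p Pp)) sqr_sqrtr.
by rewrite sumr_const mulr_natl subrr.
Qed.

End SqrtPair.

(* The squared Welch bound for M vectors of squared norm N/M: the mean squared
   off-diagonal Gram entry of a Parseval frame with such columns. *)
Definition welch (R : realFieldType) (N M : nat) : R :=
  (N%:R - M%:R * (N%:R / M%:R) ^+ 2) / (M * M.-1)%:R.

Lemma welch_bounds (R : realFieldType) N M : (2 <= N <= M)%N ->
  0 <= welch R N M < (N%:R / M%:R) ^+ 2.
Proof.
case/andP=> N_ge2 N_le_M; have M_ge2 := leq_trans N_ge2 N_le_M.
have Nr_ge2 : 2 <= N%:R :> R by rewrite ler_nat.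
have Mr_ge_N : N%:R <= M%:R :> R by rewrite ler_nat.
have welchE : welch R N M = N%:R * (M%:R - N%:R) / (M%:R ^+ 2 * (M%:R - 1)).
  rewrite /welch -subn1 natrM natrB ?(leq_trans _ M_ge2) //.
  by field; rewrite subr_eq0 pnatr_eq0 (gtn_eqF (leq_trans _ M_ge2)) ?pnatr_eq1 ?gtn_eqF.
have den_gt0 : 0 < M%:R ^+ 2 * (M%:R - 1) :> R.
  by rewrite mulr_gt0 ?exprn_gt0 ?subr_gt0; lra.
rewrite welchE; apply/andP; split.
  by apply: divr_ge0 (ltW den_gt0); apply: mulr_ge0; lra.
rewrite ltr_pdivrMr // expr_div_n mulrA divfK.
  have : 0 < N%:R * M%:R * (N%:R - 1) :> R by rewrite !mulr_gt0 ?subr_gt0; lra.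
  nra.
by rewrite sqrf_eq0 pnatr_eq0 gtn_eqF // (leq_trans _ M_ge2).
Qed.

Section RealComplex.
Variable R : rcfType.
Local Open Scope complex_scope.

Lemma leif_complex (x y : R) C : (x%:C <= y%:C ?= iff C) = (x <= y ?= iff C).
Proof. by rewrite /Order.leif lecR (inj_eq (@complexI R)). Qed.

Lemma sqrtC_complex (x : R) : 0 <= x -> sqrtC x%:C = (Num.sqrt x)%:C.
Proof.
by move=> x_ge0; rewrite -{1}(sqr_sqrtr x_ge0) rmorphXn sqrCK // ler0c sqrtr_ge0.
Qed.

Lemma normC_complex (z : R[i]) : `|z| = (complex.Re `|z|)%:C.
Proof. by rewrite RRe_real // normr_real. Qed.

End RealComplex.

Definition NE2_bound (R : rcfType) (N M : nat) : R :=
  (M * M.-1)%:R * sqrt_pair (N%:R / M%:R) (Num.sqrt (welch R N M)).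

Section FrameBound.
Variables (R : rcfType) (N M : nat) (Phi : 'M[R[i]]_(N, M)).
Local Open Scope complex_scope.
Hypotheses (N_ge2 : (2 <= N)%N) (N_le_M : (N <= M)%N).
Hypothesis Phi_diag : forall i, inner_col Phi i i = N%:R / M%:R.

Let a : R := N%:R / M%:R.
Let w : R := welch R N M.
Let offdiag := [pred p : 'I_M * 'I_M | p.1 != p.2].
Let tau (p : 'I_M * 'I_M) : R := complex.Re `|inner_col Phi p.1 p.2|.

Let M_ge2 : (2 <= M)%N. Proof. exact: leq_trans N_ge2 N_le_M. Qed.

Let aE : N%:R / M%:R = a%:C.
Proof. by rewrite fmorph_div /= !rmorph_nat. Qed.

Let a_gt0 : 0 < a.
Proof. by rewrite divr_gt0 // ltr0n ?(leq_trans _ N_ge2) ?(leq_trans _ M_ge2). Qed.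

Let tauE p : `|inner_col Phi p.1 p.2| = (tau p)%:C.
Proof. exact: normC_complex. Qed.

Let tau_bounds p : 0 <= tau p <= a.
Proof.
rewrite -ler0c -lecR -tauE -aE normr_ge0 /=.
by apply: norm_inner_col_le; rewrite ?Phi_diag // aE ltcR.
Qed.

Let card_offdiag_nat : #|offdiag| = (M * M.-1)%N.
Proof. by rewrite card_offdiag card_ord. Qed.

Let card_offdiag_neq0 : #|offdiag|%:R != 0 :> R.
Proof.
by rewrite card_offdiag_nat pnatr_eq0 muln_eq0 negb_or -!lt0n -subn1 subn_gt0 ltnW.
Qed.

Lemma NE2_real : NE 2 Phi *+ 2 = (\sum_(p | offdiag p) sqrt_pair a (tau p))%:C.
Proof.
rewrite (NE2_offdiag Phi_diag) rmorph_sum; apply: eq_bigr => p _.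
have /andP [tau_ge0 tau_le_a] := tau_bounds p.
rewrite tauE aE -rmorphD -rmorphB !sqrtC_complex ?rmorphD //; lra.
Qed.

Lemma offdiag_potential_real :
  #|offdiag|%:R * w <= \sum_(p | offdiag p) tau p ^+ 2 ?= iff (Phi *m adjmx Phi == 1%:M).
Proof.
have Pw : #|offdiag|%:R * w = N%:R - a ^+ 2 *+ M.
  by rewrite /w /welch -card_offdiag_nat mulrC divfK // [M%:R * _]mulr_natl.
have aM : N%:R / M%:R *+ M = N%:R :> R[i].
  by rewrite -mulr_natr divfK // pnatr_eq0 gtn_eqF // (leq_trans _ M_ge2).
have sum_tauE : \sum_(p : 'I_M * 'I_M | p.1 != p.2) `|inner_col Phi p.1 p.2| ^+ 2 =
                (\sum_(p | offdiag p) tau p ^+ 2)%:C.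
  by rewrite rmorph_sum; apply: eq_bigr => p _; rewrite tauE rmorphXn.
have constE : N%:R - `|N%:R / M%:R| ^+ 2 *+ M = (N%:R - a ^+ 2 *+ M)%:C.
  by rewrite aE ger0_norm ?ler0c ?(ltW a_gt0) // rmorphB !rmorphMn rmorphXn rmorph1.
by have := offdiag_potential_leif Phi_diag aM; rewrite sum_tauE constE leif_complex Pw.
Qed.

Let w_bounds : 0 <= w < a ^+ 2.
Proof. by apply: welch_bounds; rewrite N_ge2. Qed.

Let NE2_leif : NE 2 Phi *+ 2 <= (NE2_bound R N M)%:C
  ?= iff [forall (p | offdiag p), tau p == Num.sqrt w].
Proof.
have /andP [w_ge0 w_lt] := w_bounds.
rewrite NE2_real leif_complex /NE2_bound -card_offdiag_nat.
exact: (sum_sqrt_pair_leif a_gt0 w_ge0 w_lt (fun p (_ : offdiag p) => tau_bounds p)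
  offdiag_potential_real.1).
Qed.

Lemma NE2_le_bound : NE 2 Phi *+ 2 <= (NE2_bound R N M)%:C.
Proof. exact: NE2_leif.1. Qed.

Let sum_tau_const c : {in offdiag, forall p, tau p = c} ->
  \sum_(p | offdiag p) tau p ^+ 2 = #|offdiag|%:R * c ^+ 2.
Proof.
move=> tau_c; rewrite (eq_bigr (fun=> c ^+ 2)) => [|p /tau_c -> //].
by rewrite sumr_const mulr_natl.
Qed.

Let parseval_tau_const :
  parseval Phi -> (forall i j i' j', i != j -> i' != j' ->
                   `|inner_col Phi i j| = `|inner_col Phi i' j'|) ->
  {in offdiag, forall p, tau p = Num.sqrt w}.
Proof.
move=> /eqP parPhi equi; pose p0 : 'I_M * 'I_M := (Ordinal (ltnW M_ge2), Ordinal M_ge2).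
have tau_p0 : {in offdiag, forall p, tau p = tau p0}.
  by move=> p p_off; apply: complexI; rewrite -!tauE; apply: equi.
have : #|offdiag|%:R * w = #|offdiag|%:R * tau p0 ^+ 2.
  by rewrite -(sum_tau_const tau_p0); apply/eqP; rewrite offdiag_potential_real.2.
move=> /(mulfI card_offdiag_neq0) ->.
by move=> p /tau_p0 ->; rewrite sqrtr_sqr ger0_norm // (andP (tau_bounds p0)).1.
Qed.

Lemma NE2_eq_bound : NE 2 Phi *+ 2 = (NE2_bound R N M)%:C <->
  parseval Phi /\ (forall i j i' j', i != j -> i' != j' ->
                   `|inner_col Phi i j| = `|inner_col Phi i' j'|).
Proof.
have [_ NE2_eq] := NE2_leif.
split=> [/eqP | [parPhi equi]]; last first.
  apply/eqP; rewrite NE2_eq; apply/forall_inP => p.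
  by move=> /(parseval_tau_const parPhi equi) ->.
rewrite NE2_eq => /forall_inP tau_w.
have {}tau_w : {in offdiag, forall p, tau p = Num.sqrt w} by move=> p /tau_w /eqP.
split=> [|i j i' j' ij ij'].
  apply/eqP; rewrite -offdiag_potential_real.2 (sum_tau_const tau_w) sqr_sqrtr //.
  exact: (andP w_bounds).1.
by rewrite (tauE (i, j)) (tauE (i', j')) !tau_w.
Qed.

End FrameBound.

Theorem proposition20 (R : realType) (realF : bool) (N M : nat) (hN : (2 <= N)%N)
  (hex : exists Psi : 'M[R[i]]_(N, M),
     over_field realF Psi /\ parseval Psi /\ equiangular Psi)
  (Phi : 'M[R[i]]_(N, M)) (hPhi : calE realF Phi) :
  (forall Psi : 'M[R[i]]_(N, M), calE realF Psi -> NE 2 Psi <= NE 2 Phi)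
  <-> (parseval Phi /\ equiangular Phi).
Proof.
have [Psi [Psi_F [parPsi [Psi_norm Psi_off]]]] := hex.
have N_le_M := parseval_le parPsi.
have Psi_diag := parseval_inner_col_diag parPsi Psi_norm.
have PsiE : calE realF Psi by split=> [|i]; [exact: Psi_F | rewrite norm_colE Psi_diag].
have Psi_max := (NE2_eq_bound hN N_le_M Psi_diag).2 (conj parPsi Psi_off).
have Phi_diag := calE_inner_col hPhi.
split=> [Phi_max | [parPhi [_ Phi_off]] Psi' Psi'E].
  have : NE 2 Phi *+ 2 = real_complex R (NE2_bound R N M).
    apply/le_anti; rewrite (NE2_le_bound hN N_le_M Phi_diag) -Psi_max.
    by rewrite (@ler_pMn2r _ 2 isT) Phi_max.
  move=> /(NE2_eq_bound hN N_le_M Phi_diag) [parPhi Phi_off].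
  split; first exact: parPhi.
  by split=> [i j|]; [rewrite !hPhi.2 | exact: Phi_off].
rewrite -(@ler_pMn2r _ 2 isT).
apply: le_trans (NE2_le_bound hN N_le_M (calE_inner_col Psi'E)) _.
by rewrite ((NE2_eq_bound hN N_le_M Phi_diag).2 (conj parPhi Phi_off)).
Qed.
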